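(* Let $\gamma$ be a nonzero constant, and let $(H,P)$ be one of the following pairs of polynomials: (trigonometric) $H(u,u_1)=(\gamma+\gamma^{-1})(u_1-\gamma u)(\gamma u_1-u)+\tfrac14(1-\gamma^2)^2(1+\gamma^{-2})$, $P(u_{-1},u,u_1,u_2)=(\gamma u_2-u_{-1})(u_1-\gamma u)+(u_2-\gamma u_1)(\gamma u_{-1}-u)+\tfrac14(1-\gamma^2)^2(1+\gamma^{-2})$; (rational) $H(u,u_1)=(u_1-u)^2-2\gamma^2(u_1+u)+\gamma^4$, $P(u_{-1},u,u_1,u_2)=\tfrac12(u_2+u)(u_1+u_{-1})-u_2u-u_1u_{-1}-\gamma^2(u_{-1}+u+u_1+u_2)+3\gamma^4$. If $u(n,t)$ solves $$u_{,t}=\frac{H(u_{-1},u)H(u,u_1)(u_2-u_{-2})}{P(u_{-2},u_{-1},u,u_1)P(u_{-1},u,u_1,u_2)},$$ then $w(n,t)=\dfrac{H(u,u_1)}{P(u_{-1},u,u_1,u_2)}-1$ solves $$w_{,t}=(w+1)\Bigl(w_2\Bigl(\frac{1}{w_1}+1\Bigr)w-w\Bigl(\frac{1}{w_{-1}}+1\Bigr)w_{-2}+w_1-w_{-1}\Bigr).$$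
   Context: Here $u=u(n,t)$, $u_m=u(n+m,t)$, $w=w(n,t)$, $w_m=w(n+m,t)$, $n\in\mathbb Z$. *)

From Stdlib Require Import Reals ZArith.
From Coquelicot Require Import Coquelicot.
Open Scope R_scope.

Inductive HPcase := Trigonometric | Rational.

Definition Hpol (c : HPcase) (g u u1 : R) : R :=
  match c with
  | Trigonometric =>
      (g + / g) * (u1 - g * u) * (g * u1 - u)
        + / 4 * (1 - g ^ 2) ^ 2 * (1 + / g ^ 2)
  | Rational =>
      (u1 - u) ^ 2 - 2 * g ^ 2 * (u1 + u) + g ^ 4
  end.

Definition Ppol (c : HPcase) (g um1 u u1 u2 : R) : R :=
  match c with
  | Trigonometric =>
      (g * u2 - um1) * (u1 - g * u) + (u2 - g * u1) * (g * um1 - u)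
        + / 4 * (1 - g ^ 2) ^ 2 * (1 + / g ^ 2)
  | Rational =>
      / 2 * (u2 + u) * (u1 + um1) - u2 * u - u1 * um1
        - g ^ 2 * (um1 + u + u1 + u2) + 3 * g ^ 4
  end.

Definition sh (u : Z -> R -> R) (m : Z) (n : Z) (t : R) : R := u (n + m)%Z t.

Definition wOf (c : HPcase) (g : R) (u : Z -> R -> R) (n : Z) (t : R) : R :=
  Hpol c g (u n t) (sh u 1 n t)
    / Ppol c g (sh u (-1) n t) (u n t) (sh u 1 n t) (sh u 2 n t) - 1.

From Stdlib Require Import Reals ZArith.
From Coquelicot Require Import Coquelicot.
Open Scope R_scope.

(* Since w + 1 = H(u,u_1) / P(u_{-1},u,u_1,u_2), the quotient rule and the
   u-equation make w_t a rational function of u_{-3}, ..., u_4, and so is the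
   right-hand side of the w-equation.  Their equality follows from three
   polynomial identities: the terms containing u_{-3} (coming from u_{-1,t} and
   from w_{-2}) combine into a polynomial in u_{-2}, ..., u_2, symmetrically for
   u_4, and the remaining terms match.  Both equations are invariant under
   n |-> n + k, so it suffices to argue at n = 0. *)

Section Identities.

Variables (c : HPcase) (g : R).

Local Notation H := (Hpol c g).
Local Notation P := (Ppol c g).

Definition dHpol_du (u u1 : R) : R :=
  match c with
  | Trigonometric => (g + / g) * (- g * (g * u1 - u) - (u1 - g * u))
  | Rational => -2 * (u1 - u) - 2 * g ^ 2
  end.

Definition dHpol_du1 (u u1 : R) : R :=
  match c with
  | Trigonometric => (g + / g) * ((g * u1 - u) + g * (u1 - g * u))
  | Rational => 2 * (u1 - u) - 2 * g ^ 2
  end.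

Definition dPpol_dum1 (um1 u u1 u2 : R) : R :=
  match c with
  | Trigonometric => - (u1 - g * u) + g * (u2 - g * u1)
  | Rational => / 2 * (u2 + u) - u1 - g ^ 2
  end.

Definition dPpol_du (um1 u u1 u2 : R) : R :=
  match c with
  | Trigonometric => - g * (g * u2 - um1) - (u2 - g * u1)
  | Rational => / 2 * (u1 + um1) - u2 - g ^ 2
  end.

Definition dPpol_du1 (um1 u u1 u2 : R) : R :=
  match c with
  | Trigonometric => (g * u2 - um1) - g * (g * um1 - u)
  | Rational => / 2 * (u2 + u) - um1 - g ^ 2
  end.

Definition dPpol_du2 (um1 u u1 u2 : R) : R :=
  match c with
  | Trigonometric => g * (u1 - g * u) + (g * um1 - u)
  | Rational => / 2 * (u1 + um1) - u - g ^ 2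
  end.

Lemma is_derive_Hpol (f f1 : R -> R) (t df df1 : R) :
  is_derive f t df -> is_derive f1 t df1 ->
  is_derive (fun s => H (f s) (f1 s)) t
    (dHpol_du (f t) (f1 t) * df + dHpol_du1 (f t) (f1 t) * df1).
Proof.
intros Df Df1.
assert (Ef : ex_derive f t) by (exists df; exact Df).
assert (Ef1 : ex_derive f1 t) by (exists df1; exact Df1).
assert (Ed : Derive (fun s : R => f s) t = df) by (apply is_derive_unique; exact Df).
assert (Ed1 : Derive (fun s : R => f1 s) t = df1) by (apply is_derive_unique; exact Df1).
unfold dHpol_du, dHpol_du1; destruct c; cbn [Hpol];
  auto_derive; try tauto; rewrite Ed, Ed1; ring.
Qed.

Lemma is_derive_Ppol (fm1 f f1 f2 : R -> R) (t dfm1 df df1 df2 : R) :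
  is_derive fm1 t dfm1 -> is_derive f t df -> is_derive f1 t df1 -> is_derive f2 t df2 ->
  is_derive (fun s => P (fm1 s) (f s) (f1 s) (f2 s)) t
    (dPpol_dum1 (fm1 t) (f t) (f1 t) (f2 t) * dfm1 + dPpol_du (fm1 t) (f t) (f1 t) (f2 t) * df
     + dPpol_du1 (fm1 t) (f t) (f1 t) (f2 t) * df1 + dPpol_du2 (fm1 t) (f t) (f1 t) (f2 t) * df2).
Proof.
intros Dfm1 Df Df1 Df2.
assert (Efm1 : ex_derive fm1 t) by (exists dfm1; exact Dfm1).
assert (Ef : ex_derive f t) by (exists df; exact Df).
assert (Ef1 : ex_derive f1 t) by (exists df1; exact Df1).
assert (Ef2 : ex_derive f2 t) by (exists df2; exact Df2).
assert (Edm1 : Derive (fun s : R => fm1 s) t = dfm1) by (apply is_derive_unique; exact Dfm1).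
assert (Ed : Derive (fun s : R => f s) t = df) by (apply is_derive_unique; exact Df).
assert (Ed1 : Derive (fun s : R => f1 s) t = df1) by (apply is_derive_unique; exact Df1).
assert (Ed2 : Derive (fun s : R => f2 s) t = df2) by (apply is_derive_unique; exact Df2).
unfold dPpol_dum1, dPpol_du, dPpol_du1, dPpol_du2; destruct c; cbn [Ppol];
  auto_derive; try tauto; rewrite Edm1, Ed, Ed1, Ed2; ring.
Qed.

Definition wval (um1 u u1 u2 : R) : R := H u u1 / P um1 u u1 u2 - 1.

Lemma Hpol_sub_Ppol_neq0 (um1 u u1 u2 : R) :
  P um1 u u1 u2 <> 0 -> wval um1 u u1 u2 <> 0 -> H u u1 - P um1 u u1 u2 <> 0.
Proof.
intros Pnz Wnz E; apply Wnz; unfold wval.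
rewrite (Rminus_diag_uniq _ _ E); field; exact Pnz.
Qed.

Definition wval_deriv (um1 u u1 u2 dum1 du du1 du2 : R) : R :=
  ((dHpol_du u u1 * du + dHpol_du1 u u1 * du1) * P um1 u u1 u2
   - H u u1 * (dPpol_dum1 um1 u u1 u2 * dum1 + dPpol_du um1 u u1 u2 * du
               + dPpol_du1 um1 u u1 u2 * du1 + dPpol_du2 um1 u u1 u2 * du2))
  / P um1 u u1 u2 ^ 2.

Lemma is_derive_wval (fm1 f f1 f2 : R -> R) (t dfm1 df df1 df2 : R) :
  is_derive fm1 t dfm1 -> is_derive f t df -> is_derive f1 t df1 -> is_derive f2 t df2 ->
  P (fm1 t) (f t) (f1 t) (f2 t) <> 0 ->
  is_derive (fun s => wval (fm1 s) (f s) (f1 s) (f2 s)) t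
    (wval_deriv (fm1 t) (f t) (f1 t) (f2 t) dfm1 df df1 df2).
Proof.
intros Dfm1 Df Df1 Df2 Pnz.
rewrite <- (Rminus_0_r (wval_deriv _ _ _ _ _ _ _ _)).
exact (is_derive_minus _ _ t _ _
  (is_derive_div _ _ t _ _ (is_derive_Hpol f f1 t df df1 Df Df1)
     (is_derive_Ppol fm1 f f1 f2 t dfm1 df df1 df2 Dfm1 Df Df1 Df2) Pnz)
  (is_derive_const 1 t)).
Qed.

Definition u_rhs (um2 um1 u u1 u2 : R) : R :=
  H um1 u * H u u1 * (u2 - um2) / (P um2 um1 u u1 * P um1 u u1 u2).

Definition w_rhs (wm2 wm1 w w1 w2 : R) : R :=
  (w + 1) * (w2 * (/ w1 + 1) * w - w * (/ wm1 + 1) * wm2 + w1 - wm1).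

Definition left_tail (um2 um1 u u1 u2 : R) : R :=
  match c with
  | Trigonometric =>
      (g ^ 2 + 1) * (um2 * u + um2 * u2 + um1 * u1 + u1 ^ 2)
      - (g ^ 2 + 1) ^ 2 / g * um2 * u1
      - g * (um1 * u + um1 * u2 + u * u1 + u1 * u2)
  | Rational =>
      um2 * u - 2 * um2 * u1 + um2 * u2 - 2 * um2 * g ^ 2 - / 2 * um1 * u
      + um1 * u1 - / 2 * um1 * u2 + um1 * g ^ 2 - / 2 * u * u1 + u * g ^ 2
      + u1 ^ 2 - / 2 * u1 * u2 - u1 * g ^ 2 + u2 * g ^ 2 - 2 * g ^ 4
  end.

(* H and P are invariant under reversing their arguments, so the u_4-terms
   mirror the u_{-3}-terms. *)
Definition right_tail (um1 u u1 u2 u3 : R) : R := left_tail u3 u2 u1 u um1.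

Hypothesis g_neq0 : g <> 0.

Lemma left_tail_identity (um3 um2 um1 u0 u1 u2 : R) :
  dPpol_dum1 um1 u0 u1 u2 * H um2 um1 * (u1 - um3) * (H um1 u0 - P um2 um1 u0 u1)
  = (H u0 u1 - P um1 u0 u1 u2) * (H um2 um1 - P um3 um2 um1 u0) * P um2 um1 u0 u1
    - P um3 um2 um1 u0 * (H um1 u0 - P um2 um1 u0 u1) * left_tail um2 um1 u0 u1 u2.
Proof.
unfold dPpol_dum1, left_tail; destruct c; cbn [Hpol Ppol]; field; exact g_neq0.
Qed.

Lemma right_tail_identity (um1 u0 u1 u2 u3 u4 : R) :
  dPpol_du2 um1 u0 u1 u2 * H u2 u3 * (u0 - u4) * (H u1 u2 - P u0 u1 u2 u3)
  = (H u0 u1 - P um1 u0 u1 u2) * (H u2 u3 - P u1 u2 u3 u4) * P u0 u1 u2 u3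
    - P u1 u2 u3 u4 * (H u1 u2 - P u0 u1 u2 u3) * right_tail um1 u0 u1 u2 u3.
Proof.
unfold dPpol_du2, right_tail, left_tail; destruct c; cbn [Hpol Ppol]; field; exact g_neq0.
Qed.

Lemma central_identity (um2 um1 u0 u1 u2 u3 : R) :
  (dHpol_du u0 u1 * H um1 u0 * (u2 - um2) * P u0 u1 u2 u3
   + dHpol_du1 u0 u1 * H u1 u2 * (u3 - um1) * P um2 um1 u0 u1) * P um1 u0 u1 u2
  - H u0 u1 * (dPpol_du um1 u0 u1 u2 * H um1 u0 * (u2 - um2) * P u0 u1 u2 u3
               + dPpol_du1 um1 u0 u1 u2 * H u1 u2 * (u3 - um1) * P um2 um1 u0 u1)
  = P um1 u0 u1 u2 *
      (P um1 u0 u1 u2 * ((H u1 u2 - P u0 u1 u2 u3) * P um2 um1 u0 u1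
                         - (H um1 u0 - P um2 um1 u0 u1) * P u0 u1 u2 u3)
       - H um1 u0 * left_tail um2 um1 u0 u1 u2 * P u0 u1 u2 u3
       + H u1 u2 * right_tail um1 u0 u1 u2 u3 * P um2 um1 u0 u1).
Proof.
unfold dHpol_du, dHpol_du1, dPpol_du, dPpol_du1, right_tail, left_tail;
  destruct c; cbn [Hpol Ppol]; field; exact g_neq0.
Qed.

Lemma wval_deriv_u_rhs (um3 um2 um1 u0 u1 u2 u3 u4 : R) :
  P um3 um2 um1 u0 <> 0 -> P um2 um1 u0 u1 <> 0 -> P um1 u0 u1 u2 <> 0 ->
  P u0 u1 u2 u3 <> 0 -> P u1 u2 u3 u4 <> 0 ->
  wval um2 um1 u0 u1 <> 0 -> wval u0 u1 u2 u3 <> 0 ->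
  wval_deriv um1 u0 u1 u2 (u_rhs um3 um2 um1 u0 u1) (u_rhs um2 um1 u0 u1 u2)
    (u_rhs um1 u0 u1 u2 u3) (u_rhs u0 u1 u2 u3 u4)
  = w_rhs (wval um3 um2 um1 u0) (wval um2 um1 u0 u1) (wval um1 u0 u1 u2)
      (wval u0 u1 u2 u3) (wval u1 u2 u3 u4).
Proof.
intros P1nz P2nz P3nz P4nz P5nz W2nz W4nz.
pose proof (Hpol_sub_Ppol_neq0 _ _ _ _ P2nz W2nz) as Q2nz.
pose proof (Hpol_sub_Ppol_neq0 _ _ _ _ P4nz W4nz) as Q4nz.
pose proof (left_tail_identity um3 um2 um1 u0 u1 u2) as L.
pose proof (right_tail_identity um1 u0 u1 u2 u3 u4) as R.
pose proof (central_identity um2 um1 u0 u1 u2 u3) as C.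
unfold wval_deriv, u_rhs, w_rhs, wval.
set (H1 := H um2 um1) in *; set (H2 := H um1 u0) in *; set (H3 := H u0 u1) in *;
set (H4 := H u1 u2) in *; set (H5 := H u2 u3) in *.
set (P1 := P um3 um2 um1 u0) in *; set (P2 := P um2 um1 u0 u1) in *;
set (P3 := P um1 u0 u1 u2) in *; set (P4 := P u0 u1 u2 u3) in *;
set (P5 := P u1 u2 u3 u4) in *.
set (A := left_tail um2 um1 u0 u1 u2) in *; set (B := right_tail um1 u0 u1 u2 u3) in *.
(* w_t minus the right-hand side, as a combination of the three identities *)
apply Rminus_diag_uniq.
transitivity (H3 / P3 *
  (H4 / (P3 * P4 * P5 * (H4 - P4))
     * (dPpol_du2 um1 u0 u1 u2 * H5 * (u0 - u4) * (H4 - P4)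
        - ((H3 - P3) * (H5 - P5) * P4 - P5 * (H4 - P4) * B))
   - H2 / (P1 * P2 * P3 * (H2 - P2))
     * (dPpol_dum1 um1 u0 u1 u2 * H1 * (u1 - um3) * (H2 - P2)
        - ((H3 - P3) * (H1 - P1) * P2 - P1 * (H2 - P2) * A))
   + ((dHpol_du u0 u1 * H2 * (u2 - um2) * P4 + dHpol_du1 u0 u1 * H4 * (u3 - um1) * P2) * P3
      - H3 * (dPpol_du um1 u0 u1 u2 * H2 * (u2 - um2) * P4
              + dPpol_du1 um1 u0 u1 u2 * H4 * (u3 - um1) * P2)
      - P3 * (P3 * ((H4 - P4) * P2 - (H2 - P2) * P4) - H2 * A * P4 + H4 * B * P2))
     / (P2 * P3 ^ 2 * P4))).
- field; tauto.
- rewrite L, R, C; field; tauto.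
Qed.

End Identities.

Lemma sh_translate (u : Z -> R -> R) (n k m : Z) (t : R) :
  sh (fun j => u (n + j)%Z) k m t = sh u k (n + m) t.
Proof. unfold sh; now rewrite Z.add_assoc. Qed.

Lemma wOf_translate (c : HPcase) (g : R) (u : Z -> R -> R) (n m : Z) (t : R) :
  wOf c g (fun j => u (n + j)%Z) m t = wOf c g u (n + m) t.
Proof. unfold wOf; now rewrite !sh_translate. Qed.

Lemma w_equation_at_origin (c : HPcase) (g : R) (u : Z -> R -> R) (t : R) :
  g <> 0 ->
  (forall (n : Z) (s : R), Ppol c g (sh u (-1) n s) (u n s) (sh u 1 n s) (sh u 2 n s) <> 0) ->
  (forall (n : Z) (s : R),
      is_derive (u n) s
        (u_rhs c g (sh u (-2) n s) (sh u (-1) n s) (u n s) (sh u 1 n s) (sh u 2 n s))) ->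
  wOf c g u 1 t <> 0 -> wOf c g u (-1) t <> 0 ->
  is_derive (wOf c g u 0) t
    (w_rhs (wOf c g u (-2) t) (wOf c g u (-1) t) (wOf c g u 0 t) (wOf c g u 1 t)
       (wOf c g u 2 t)).
Proof.
intros g_neq0 HP Hu W1 Wm1.
change (is_derive (fun s => wval c g (u (-1)%Z s) (u 0%Z s) (u 1%Z s) (u 2%Z s)) t
  (w_rhs (wval c g (u (-3)%Z t) (u (-2)%Z t) (u (-1)%Z t) (u 0%Z t))
     (wval c g (u (-2)%Z t) (u (-1)%Z t) (u 0%Z t) (u 1%Z t))
     (wval c g (u (-1)%Z t) (u 0%Z t) (u 1%Z t) (u 2%Z t))
     (wval c g (u 0%Z t) (u 1%Z t) (u 2%Z t) (u 3%Z t))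
     (wval c g (u 1%Z t) (u 2%Z t) (u 3%Z t) (u 4%Z t)))).
rewrite <- wval_deriv_u_rhs;
  [| exact g_neq0 | exact (HP (-2)%Z t) | exact (HP (-1)%Z t) | exact (HP 0%Z t)
   | exact (HP 1%Z t) | exact (HP 2%Z t) | exact Wm1 | exact W1].
apply is_derive_wval; [exact (Hu (-1)%Z t) | exact (Hu 0%Z t) | exact (Hu 1%Z t)
                      | exact (Hu 2%Z t) | exact (HP 0%Z t)].
Qed.

Theorem mainTheorem9 (c : HPcase) (g : R) (u : Z -> R -> R) :
  g <> 0 ->
  (* the denominators P(u_{-1},u,u_1,u_2) never vanish (so the u-equation makes sense) *)
  (forall (n : Z) (t : R),
      Ppol c g (sh u (-1) n t) (u n t) (sh u 1 n t) (sh u 2 n t) <> 0) ->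
  (* u solves the lattice equation *)
  (forall (n : Z) (t : R),
      is_derive (u n) t
        (Hpol c g (sh u (-1) n t) (u n t) * Hpol c g (u n t) (sh u 1 n t)
           * (sh u 2 n t - sh u (-2) n t)
         / (Ppol c g (sh u (-2) n t) (sh u (-1) n t) (u n t) (sh u 1 n t)
            * Ppol c g (sh u (-1) n t) (u n t) (sh u 1 n t) (sh u 2 n t)))) ->
  (* then w solves its equation wherever its right-hand side is defined *)
  forall (n : Z) (t : R),
    wOf c g u (n + 1)%Z t <> 0 ->
    wOf c g u (n - 1)%Z t <> 0 ->
    is_derive (wOf c g u n) t
      ((wOf c g u n t + 1) *
         (wOf c g u (n + 2)%Z t * (/ wOf c g u (n + 1)%Z t + 1) * wOf c g u n t
          - wOf c g u n t * (/ wOf c g u (n - 1)%Z t + 1) * wOf c g u (n - 2)%Z t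
          + wOf c g u (n + 1)%Z t - wOf c g u (n - 1)%Z t)).
Proof.
intros g_neq0 HP Hu n t W1 Wm1.
pose proof (w_equation_at_origin c g (fun j => u (n + j)%Z) t g_neq0) as Dv.
rewrite !wOf_translate, Z.add_0_r in Dv.
apply (is_derive_ext (wOf c g (fun j => u (n + j)%Z) 0)).
- intro s; now rewrite wOf_translate, Z.add_0_r.
- apply Dv; [intros m s; rewrite !sh_translate; apply HP
           | intros m s; rewrite !sh_translate; apply Hu | exact W1 | exact Wm1].
Qed.
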